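(* Let $p,q\in\mathbb{N}$ with $2\le q\le \frac p2-1$. If $\overline{\xi_f}(E_{p/(q-1)})=\frac{p}{q-1}$ and $\overline{\xi_f}(E_{p/(q+1)})=\frac{p}{q+1}$, then $\overline{\xi_f}(E_{p/q})=\frac pq$.
   Context: For $p,k\in\mathbb{N}$ with $p/k\ge2$, the fraction graph $E_{p/k}$ has vertex set $\mathbb{Z}_p=\{0,\dots,p-1\}$, and distinct vertices $i,j$ are adjacent iff their cyclic distance $\min(|i-j|,p-|i-j|)$ is strictly less than $k$ (the graph depends on the pair $(p,k)$, e.g. $E_{p/(q-1)}$ uses threshold $q-1$ on $\mathbb{Z}_p$). For a graph $G$, $\overline{\xi_f}(G)$ (complement of the projective rank) is the infimum of $d/r$ over all $d,r\in\mathbb{N}$ for which there is an assignment of $r$-dimensional subspaces $W_v\le\mathbb{C}^d$ to the vertices of $G$ such that distinct non-adjacent vertices receive orthogonal subspaces. *)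

From HB Require Import structures.
From mathcomp Require Import all_boot all_order all_algebra.
From mathcomp Require Import complex.
From mathcomp Require Import classical_sets reals Rstruct.


Set Implicit Arguments.
Unset Strict Implicit.
Unset Printing Implicit Defensive.

Import Order.TTheory GRing.Theory Num.Theory.
Local Open Scope ring_scope.
Local Open Scope classical_set_scope.

Definition CC : Type := (Rdefinitions.R)[i].

Definition cdist (p : nat) (i j : 'I_p) : nat :=
  let a := if (nat_of_ord i <= nat_of_ord j)%N then (j - i)%N else (i - j)%N in minn a (p - a)%N.

Definition frac_adj (p k : nat) : rel 'I_p :=
  fun i j => (i != j) && (cdist i j < k)%N.

Arguments frac_adj : clear implicits.

(* An orthogonal (d,r)-representation of the complement: an r-dimensional
   subspace W_v of C^d for each vertex (the row space of an r x d matrix of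
   rank r), such that distinct non-adjacent vertices receive orthogonal
   subspaces (w.r.t. the standard Hermitian inner product). *)
Definition orth_rep (n : nat) (adj : rel 'I_n) (d r : nat) : Prop :=
  exists W : 'I_n -> 'M[CC]_(r, d),
    (forall v, \rank (W v) = r) /\
    (forall u v, u != v -> ~~ adj u v ->
       W u *m (map_mx Num.conj (W v))^T = 0).

Definition xi_f_bar (n : nat) (adj : rel 'I_n) : Rdefinitions.R :=
  inf [set x : Rdefinitions.R | exists d r : nat,
         (0 < d)%N /\ (0 < r)%N /\ x = ((d%:R : Rdefinitions.R) / r%:R) /\ orth_rep adj d r].

(* The upper bound comes from giving vertex v of E_{p/q} the span of the q
   consecutive basis vectors e_v, ..., e_{v+q-1} of C^p.  For the lower bound,
   take a (d,r)-representation W of E_{p/q} and pair each W_x with W_{x+1}: the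
   intersections of W_x and W_{x+1} are orthogonal as soon as x and y are at
   distance at least q-1, the sums W_x + W_{x+1} as soon as they are at
   distance at least q+1.  Giving vertex v the block diagonal of the p rotated
   spaces U_{v+i} of such a family U turns it into a representation of
   E_{p/(q-1)}, resp. E_{p/(q+1)}, in dimension p d, whose ranks S_1 and S_2
   add up to 2 p r.  The hypotheses give S_1 <= d (q-1) and S_2 <= d (q+1),
   hence p r <= d q. *)

From HB Require Import structures.
From mathcomp Require Import all_boot all_order all_algebra.
From mathcomp Require Import complex.
From mathcomp Require Import classical_sets reals Rstruct.
From mathcomp Require Import zify.

Set Implicit Arguments.
Unset Strict Implicit.
Unset Printing Implicit Defensive.

Import Order.TTheory GRing.Theory Num.Theory.

Lemma modn_lt_double m d : m < d + d -> m %% d = if m < d then m else m - d.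
Proof.
case: ifP => [lt _|/negbT ge lt2]; first by rewrite modn_small.
by rewrite -[in LHS](@subnK d m) ?modnDr ?modn_small; lia.
Qed.

(* Vertices live in 'I_n.+1, so that rotations can use the group Z_p. *)
Section CyclicDistance.
Variable n : nat.
Local Notation p := n.+1.
Implicit Types x y k : 'I_p.

Lemma val_addZp x y : val (x + y)%R = if x + y < p then x + y else x + y - p.
Proof. by rewrite /= modn_lt_double //; have := ltn_ord x; have := ltn_ord y; lia. Qed.

Lemma val_ordS x : val (ordS x) = if x.+1 < p then x.+1 else 0.
Proof. by rewrite /= modn_lt_double; have := ltn_ord x; [case: ifP; lia | lia]. Qed.

Ltac cdist_lia := rewrite /cdist ?val_addZp ?val_ordS; repeat case: ifP; lia.

Lemma cdistDr x y k : cdist (x + k)%R (y + k)%R = cdist x y.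
Proof. have := ltn_ord x; have := ltn_ord y; have := ltn_ord k; cdist_lia. Qed.

Lemma cdist_ordS x y : cdist (ordS x) (ordS y) = cdist x y.
Proof. have := ltn_ord x; have := ltn_ord y; cdist_lia. Qed.

Lemma cdist_ordSr x y : cdist x y <= (cdist x (ordS y)).+1.
Proof. have := ltn_ord x; have := ltn_ord y; cdist_lia. Qed.

Lemma cdist_ordSl x y : cdist x y <= (cdist (ordS x) y).+1.
Proof. have := ltn_ord x; have := ltn_ord y; cdist_lia. Qed.

Lemma cdist_ordS_grow q x y : q.*2 < p -> q <= (cdist x y).+1 ->
  q <= cdist x (ordS y) \/ q <= cdist (ordS x) y.
Proof. have := ltn_ord x; have := ltn_ord y; cdist_lia. Qed.

Lemma addZp_inZp_neq q x y (i j : nat) : q <= p -> i < q -> j < q ->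
  q <= cdist x y -> (x + inZp i != y + inZp j)%R.
Proof.
move=> qp iq jq; rewrite -(inj_eq val_inj) !val_addZp /= !modn_small; try lia.
have := ltn_ord x; have := ltn_ord y; cdist_lia.
Qed.

End CyclicDistance.

Local Open Scope ring_scope.

Definition mx_orth m1 m2 n (A : 'M[CC]_(m1, n)) (B : 'M[CC]_(m2, n)) : Prop :=
  A *m (map_mx Num.conj B)^T = 0.

Lemma mx_orthS m1 m2 m3 m4 n (A : 'M[CC]_(m1, n)) (B : 'M[CC]_(m2, n))
    (C : 'M[CC]_(m3, n)) (D : 'M[CC]_(m4, n)) :
  (C <= A)%MS -> (D <= B)%MS -> mx_orth A B -> mx_orth C D.
Proof.
move=> /submxP[X ->] /submxP[Y ->]; rewrite /mx_orth => AB.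
by rewrite map_mxM trmx_mul mulmxA -(mulmxA X) AB mulmx0 mul0mx.
Qed.

Lemma mx_orth_adds m1 m2 m3 m4 n (A : 'M[CC]_(m1, n)) (B : 'M[CC]_(m2, n))
    (C : 'M[CC]_(m3, n)) (D : 'M[CC]_(m4, n)) :
  mx_orth A C -> mx_orth A D -> mx_orth B C -> mx_orth B D ->
  mx_orth (A + B)%MS (C + D)%MS.
Proof.
move=> AC AD BC BD.
apply: (@mx_orthS _ _ _ _ _ (col_mx A B) (col_mx C D)); rewrite ?addsmxE //.
by rewrite /mx_orth map_col_mx tr_col_mx mul_col_mx !mul_mx_row AC AD BC BD
  !row_mx0 col_mx0.
Qed.

Lemma map_mxdiag (R S : nmodType) (f : R -> S) k (s : 'I_k -> nat)
    (B : forall i, 'M[R]_(s i)) :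
  f 0 = 0 -> map_mx f (\mxdiag_i B i) = \mxdiag_i map_mx f (B i).
Proof.
move=> f0; have -> : map_mx f (\mxdiag_i B i) =
    \mxblock_(i, j) map_mx f (if i == j then conform_mx 0 (B i) else 0).
  by apply/matrixP => x y; rewrite !mxE.
apply/eq_mxblock => i j; case: eqVneq => [<-|_]; rewrite ?conform_mx_id //.
by apply/matrixP => x y; rewrite !mxE.
Qed.

Lemma mx_orth_mxdiag k (s : 'I_k -> nat) (A B : forall i, 'M[CC]_(s i)) :
  (forall i, mx_orth (A i) (B i)) -> mx_orth (\mxdiag_i A i) (\mxdiag_i B i).
Proof.
move=> AB; rewrite /mx_orth map_mxdiag ?conjC0 // tr_mxdiag [X in _ *m X]/mxdiag.
rewrite mul_mxdiag_mxblock -[RHS]mxblock0; apply/eq_mxblock => i j.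
by case: eqVneq => [<-|_]; rewrite ?conform_mx_id ?mulmx0 // AB.
Qed.

Lemma orth_rep_of_rowspaces n (adj : rel 'I_n) N s (M : 'I_n -> 'M[CC]_N) :
  (forall v, \rank (M v) = s) ->
  (forall u v, u != v -> ~~ adj u v -> mx_orth (M u) (M v)) -> orth_rep adj N s.
Proof.
move=> rkM orthM; pose W v := castmx (rkM v, erefl N) (row_base (M v)).
have WM v : (W v :=: M v)%MS := eqmx_trans (eqmx_cast _ _) (eq_row_base _).
exists W; split=> [v|u v uv /(orthM u v uv)]; first by rewrite WM.
by apply: mx_orthS; rewrite WM.
Qed.

Section Rotation.
Variables n d : nat.
Local Notation p := n.+1.

Definition rot_diag (U : 'I_p -> 'M[CC]_d) (v : 'I_p) := \mxdiag_(i < p) U (v + i).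

Lemma rank_rot_diag U v : \rank (rot_diag U v) = (\sum_x \rank (U x))%N.
Proof. by rewrite rank_mxdiag [RHS](reindex_inj (addrI v)). Qed.

Lemma orth_rep_rot_diag k (U : 'I_p -> 'M[CC]_d) :
  (forall x y, (k <= cdist x y)%N -> mx_orth (U x) (U y)) ->
  orth_rep (frac_adj p k) (p * d) (\sum_x \rank (U x)).
Proof.
move=> orthU; have -> : (p * d = \sum_(i < p) d)%N by rewrite sum_nat_const card_ord.
apply: (orth_rep_of_rowspaces (M := rot_diag U)) => [v|u v uv]; first exact: rank_rot_diag.
rewrite /frac_adj uv -leqNgt => kuv; apply: mx_orth_mxdiag => i.
by apply: orthU; rewrite cdistDr.
Qed.

End Rotation.

Lemma mul_rowsub1_adj m1 m2 N (f : 'I_m1 -> 'I_N) (g : 'I_m2 -> 'I_N) :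
  rowsub f 1%:M *m (map_mx Num.conj (rowsub g 1%:M))^T
    = mxsub f g (1%:M : 'M[CC]_N).
Proof.
rewrite mul_rowsub_mx mul1mx map_mxsub map_mx1 trmx_mxsub trmx1.
by apply/matrixP => i j; rewrite !mxE.
Qed.

Lemma orth_rep_shift n q : (q <= n.+1)%N -> orth_rep (frac_adj n.+1 q) n.+1 q.
Proof.
move=> qp; pose f (v : 'I_n.+1) (i : 'I_q) := v + inZp i.
have f_inj v : injective (f v).
  move=> i j /addrI /(congr1 val) /=.
  by rewrite !modn_small ?(leq_trans (ltn_ord _) qp) //; apply: val_inj.
pose W v := rowsub (f v) (1%:M : 'M[CC]_n.+1).
exists W; split=> [v|u v uv].
  apply/eqP; rewrite eqn_leq rank_leq_row -{1}(mxrank1 CC q).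
  have <- : W v *m (map_mx Num.conj (W v))^T = 1%:M.
    by rewrite mul_rowsub1_adj; apply/matrixP => i j; rewrite !mxE (inj_eq (f_inj v)).
  exact: mxrankM_maxl.
rewrite /frac_adj uv -leqNgt => quv; rewrite mul_rowsub1_adj.
by apply/matrixP => i j; rewrite !mxE (negbTE (addZp_inZp_neq qp _ _ quv)).
Qed.

Section SuccessorPairs.
Variables (n d r q : nat) (W : 'I_n.+1 -> 'M[CC]_(r, d)).
Local Notation p := n.+1.
Hypothesis orthW : forall x y, (q <= cdist x y)%N -> mx_orth (W x) (W y).

Definition cap_succ x := (W x :&: W (ordS x))%MS.
Definition sum_succ x := (W x + W (ordS x))%MS.

Lemma mx_orth_cap_succ x y : (q.*2 < p)%N -> (q - 1 <= cdist x y)%N ->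
  mx_orth (cap_succ x) (cap_succ y).
Proof.
move=> qp xy; have /(cdist_ordS_grow qp) [xSy|Sxy] : (q <= (cdist x y).+1)%N by lia.
- by apply: (mx_orthS (capmxSl _ _) (capmxSr _ _)); apply: orthW.
- by apply: (mx_orthS (capmxSr _ _) (capmxSl _ _)); apply: orthW.
Qed.

Lemma mx_orth_sum_succ x y : (q + 1 <= cdist x y)%N ->
  mx_orth (sum_succ x) (sum_succ y).
Proof.
move=> xy; have := cdist_ordSr x y; have := cdist_ordSl x y.
have := cdist_ordS x y => SS Sl Sr.
by apply: mx_orth_adds; apply: orthW; lia.
Qed.

Lemma sum_rank_cap_sum_succ : (forall x, \rank (W x) = r) ->
  (\sum_x \rank (cap_succ x) + \sum_x \rank (sum_succ x) = p * r.*2)%N.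
Proof.
move=> rkW; rewrite -big_split /= (eq_bigr (fun=> r.*2)) => [|x _].
  by rewrite sum_nat_const card_ord.
by rewrite addnC mxrank_sum_cap !rkW addnn.
Qed.

End SuccessorPairs.

Lemma orth_rep_succ_pairs n q d r : (0 < q)%N -> (q.*2 < n.+1)%N ->
  orth_rep (frac_adj n.+1 q) d r ->
  exists S1 S2, [/\ (S1 + S2 = n.+1 * r.*2)%N,
    orth_rep (frac_adj n.+1 (q - 1)) (n.+1 * d) S1 &
    orth_rep (frac_adj n.+1 (q + 1)) (n.+1 * d) S2].
Proof.
move=> q0 qp [W [rkW orthW]].
have orthW' x y : (q <= cdist x y)%N -> mx_orth (W x) (W y).
  move=> qxy; apply: orthW; last by rewrite /frac_adj ltnNge qxy andbF.
  by apply: contraTneq qxy => ->; rewrite /cdist leqnn subnn min0n -ltnNge.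
exists (\sum_x \rank (cap_succ W x))%N, (\sum_x \rank (sum_succ W x))%N; split.
- exact: sum_rank_cap_sum_succ.
- by apply: orth_rep_rot_diag => x y; apply: mx_orth_cap_succ.
- by apply: orth_rep_rot_diag => x y; apply: mx_orth_sum_succ.
Qed.

Local Notation RR := Rdefinitions.R.

Lemma ler_nat_div (a b c e : nat) : (0 < b)%N -> (0 < e)%N ->
  (a%:R / b%:R <= c%:R / e%:R :> RR) = (a * e <= c * b)%N.
Proof.
move=> b0 e0.
by rewrite ler_pdivrMr ?ltr0n // mulrAC ler_pdivlMr ?ltr0n // -!natrM ler_nat.
Qed.

Lemma xi_f_bar_le n (adj : rel 'I_n) d r : (0 < d)%N -> (0 < r)%N ->
  orth_rep adj d r -> xi_f_bar adj <= d%:R / r%:R.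
Proof.
move=> d0 r0 rep; apply: ge_inf; last by exists d, r.
by exists 0 => _ [d' [r' [_ [_ [-> _]]]]]; apply: divr_ge0.
Qed.

Lemma xi_f_bar_ge n (adj : rel 'I_n) (c : RR) :
  (exists d r, [/\ (0 < d)%N, (0 < r)%N & orth_rep adj d r]) ->
  (forall d r, (0 < d)%N -> (0 < r)%N -> orth_rep adj d r -> c <= d%:R / r%:R) ->
  c <= xi_f_bar adj.
Proof.
move=> [d [r [d0 r0 rep]]] lb; apply: lb_le_inf; first by exists (d%:R / r%:R), d, r.
by move=> _ [d' [r' [d'0 [r'0 [-> rep']]]]]; apply: lb.
Qed.

Lemma orth_rep_dim_ge n (adj : rel 'I_n) a b N s : (0 < b)%N -> (0 < N)%N ->
  xi_f_bar adj = a%:R / b%:R -> orth_rep adj N s -> (a * s <= N * b)%N.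
Proof.
move=> b0 N0 xiE rep; have [->|s0] := posnP s; first by rewrite muln0.
by rewrite -ler_nat_div // -xiE; apply: xi_f_bar_le.
Qed.

Unset Implicit Arguments.

Theorem lemma17 (p q : nat) :
  (2 <= q)%N -> (2 * (q + 1)%N <= p)%N ->
  xi_f_bar (frac_adj p (q - 1)%N) = p%:R / (q - 1)%N%:R ->
  xi_f_bar (frac_adj p (q + 1)%N) = p%:R / (q + 1)%N%:R ->
  xi_f_bar (frac_adj p q) = p%:R / q%:R :> Rdefinitions.R.
Proof.
case: p => [|n] q2 qp; first lia.
move=> xi_pred xi_succ.
have shift : orth_rep (frac_adj n.+1 q) n.+1 q by apply: orth_rep_shift; lia.
apply: le_anti; rewrite xi_f_bar_le //=; last lia.
apply: xi_f_bar_ge => [|d r d0 r0 rep]; first by exists n.+1, q; split=> //; lia.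
have q2p : (q.*2 < n.+1)%N by lia.
have [S1 [S2 [S12 rep_pred rep_succ]]] := orth_rep_succ_pairs (ltnW q2) q2p rep.
have pd0 : (0 < n.+1 * d)%N by rewrite muln_gt0.
have := orth_rep_dim_ge _ pd0 xi_pred rep_pred.
have := orth_rep_dim_ge _ pd0 xi_succ rep_succ.
rewrite ler_nat_div //; nia.
Qed.
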